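(* Let $(V,E)$ be a finite undirected graph, $y=(y_n)_{n\in V}\in\mathbb{S}^V$, and let $(w_n)_{n\in V}$, $(\lambda_{n,n'})_{\{n,n'\}\in E}$ be nonnegative real weights. Consider the nonconvex problem $$\text{(P)}\quad \min_{x\in\mathbb{S}^V}\ \Psi_{\mathrm{orig}}(x)=\sum_{n\in V}w_n(1-x_n\cdot y_n)+\sum_{\{n,n'\}\in E}\lambda_{n,n'}(1-x_n\cdot x_{n'})$$ and the convex problem $$\text{(R)}\quad \min\ \Psi_{\mathrm{conv}}(x,d,e,f,g)=\sum_{n\in V}w_n(1-x_n\cdot y_n)+\sum_{\{n,n'\}\in E}\lambda_{n,n'}(1-d_{n,n'})$$ over $x_n\in\mathbb{R}^3$ ($n\in V$) and $(d_{n,n'},e_{n,n'},f_{n,n'},g_{n,n'})\in\mathbb{R}^4$ ($\{n,n'\}\in E$), subject to $P_{n,n'}\succcurlyeq 0$ for all $\{n,n'\}\in E$. Then: (i) for every $x\in\mathbb{S}^V$ there exist $d,e,f,g$ such that $(x,d,e,f,g)$ is feasible for (R) and $\Psi_{\mathrm{conv}}(x,d,e,f,g)=\Psi_{\mathrm{orig}}(x)$; hence the optimal value of (R) is at most that of (P). (ii) If $(x^\star,d^\star,e^\star,f^\star,g^\star)$ is a minimizer of (R) such that $x^\star_n\in\mathbb{S}$ for every $n\in V$ and $d^\star_{n,n'}=x^\star_n\cdot x^\star_{n'}$ for every $\{n,n'\}\in E$, then $x^\star$ is a global minimizer of (P).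
   Context: $\mathbb{S}=\{x\in\mathbb{R}^3:\|x\|_2=1\}$, $x\cdot x'$ is the Euclidean inner product, $i=\sqrt{-1}$, and $\succcurlyeq 0$ means Hermitian positive semidefinite. Edges of $(V,E)$ are 2-element subsets $\{n,n'\}$ of $V$; for each edge a fixed ordering $(n,n')$ of its endpoints is chosen. For real $a,b,c,a',b',c',d,e,f,g$, define the $6\times 6$ Hermitian matrix $$P(a,b,c,a',b',c',d,e,f,g)=\begin{pmatrix} 1&0&-ci&-b-ai&-c'i&-b'-a'i\\ 0&1&b-ai&ci&b'-a'i&c'i\\ ci&b+ai&1&0&d-gi&-f-ei\\ -b+ai&-ci&0&1&f-ei&d+gi\\ c'i&b'+a'i&d+gi&f+ei&1&0\\ -b'+a'i&-c'i&-f+ei&d-gi&0&1 \end{pmatrix}.$$ For an edge $\{n,n'\}$ with $x_n=(x_n^1,x_n^2,x_n^3)$, $P_{n,n'}:=P(x_n^1,x_n^2,x_n^3,x_{n'}^1,x_{n'}^2,x_{n'}^3,d_{n,n'},e_{n,n'},f_{n,n'},g_{n,n'})$. *)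

From HB Require Import structures.
From mathcomp Require Import all_boot all_order all_algebra.
From mathcomp Require Import complex.
From mathcomp Require Import reals.
Set Implicit Arguments. Unset Strict Implicit. Unset Printing Implicit Defensive.
Import Order.TTheory GRing.Theory Num.Theory.
Local Open Scope ring_scope.
Local Open Scope complex_scope.

Section Defs.
Variable R : realType.

Definition dot3 (u v : 'rV[R]_3) : R := \sum_(k < 3) u 0 k * v 0 k.

Definition onSphere (u : 'rV[R]_3) : Prop := dot3 u u = 1.

Definition hpsd (n : nat) (A : 'M[R[i]]_n) : Prop :=
  (forall p q, A q p = (A p q)^*) /\
  (forall v : 'cV[R[i]]_n,
      0 <= \sum_(p < n) \sum_(q < n) (v p 0)^* * A p q * v q 0).

Definition Pmat (a b c a' b' c' d e f g : R) : 'M[R[i]]_6 :=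
  let I := 'i : R[i] in
  let rows : seq (seq R[i]) :=
    [:: [:: 1; 0; - c%:C * I; - b%:C - a%:C * I; - c'%:C * I; - b'%:C - a'%:C * I];
        [:: 0; 1; b%:C - a%:C * I; c%:C * I; b'%:C - a'%:C * I; c'%:C * I];
        [:: c%:C * I; b%:C + a%:C * I; 1; 0; d%:C - g%:C * I; - f%:C - e%:C * I];
        [:: - b%:C + a%:C * I; - c%:C * I; 0; 1; f%:C - e%:C * I; d%:C + g%:C * I];
        [:: c'%:C * I; b'%:C + a'%:C * I; d%:C + g%:C * I; f%:C + e%:C * I; 1; 0];
        [:: - b'%:C + a'%:C * I; - c'%:C * I; - f%:C + e%:C * I; d%:C - g%:C * I; 0; 1] ] in
  \matrix_(p < 6, q < 6) nth 0 (nth [::] rows p) q.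

Variable V : finType.
Variable E : {set V * V}.  (* each edge {n,n'} stored once, with its fixed ordering (n,n') *)

Definition Pedge (x : V -> 'rV[R]_3) (d e f g : V -> V -> R) (n n' : V) :=
  Pmat (x n 0 0) (x n 0 1) (x n 0 2) (x n' 0 0) (x n' 0 1) (x n' 0 2)
       (d n n') (e n n') (f n n') (g n n').

Definition Psi_orig (w : V -> R) (y : V -> 'rV[R]_3) (lam : V -> V -> R)
  (x : V -> 'rV[R]_3) : R :=
  \sum_(n : V) w n * (1 - dot3 (x n) (y n))
  + \sum_(p in E) lam p.1 p.2 * (1 - dot3 (x p.1) (x p.2)).

Definition Psi_conv (w : V -> R) (y : V -> 'rV[R]_3) (lam : V -> V -> R)
  (x : V -> 'rV[R]_3) (d : V -> V -> R) : R :=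
  \sum_(n : V) w n * (1 - dot3 (x n) (y n))
  + \sum_(p in E) lam p.1 p.2 * (1 - d p.1 p.2).

Definition feasR (x : V -> 'rV[R]_3) (d e f g : V -> V -> R) : Prop :=
  forall p, p \in E -> hpsd (Pedge x d e f g p.1 p.2).

Definition minP w y lam (xs : V -> 'rV[R]_3) : Prop :=
  (forall n, onSphere (xs n)) /\
  forall x : V -> 'rV[R]_3, (forall n, onSphere (x n)) ->
    Psi_orig w y lam xs <= Psi_orig w y lam x.

Definition minR w y lam (xs : V -> 'rV[R]_3) (ds es fs gs : V -> V -> R) : Prop :=
  feasR xs ds es fs gs /\
  forall x d e f g, feasR x d e f g ->
    Psi_conv w y lam xs ds <= Psi_conv w y lam x d.

End Defs.

(** With [d = x_n . x_n'] and [(e, f, g)] the coordinates of [x_n' × x_n], the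
    Hermitian form of [P_{n,n'}] is a sum of two squared moduli (the images of
    the first two rows) plus [(1 - |x_n|^2)] and [(1 - |x_n'|^2)] times
    nonnegative quantities.  On the sphere these vanish, so every [x] in [S^V]
    lifts to a feasible point of (R) with [Psi_conv = Psi_orig], and (R) is a
    relaxation of (P).  A tight minimizer of (R) therefore attains the value of
    (P) at a feasible point of (P), hence minimizes (P). *)

From HB Require Import structures.
From mathcomp Require Import all_boot all_order all_algebra.
From mathcomp Require Import complex reals ring.
Set Implicit Arguments. Unset Strict Implicit. Unset Printing Implicit Defensive.
Import Order.TTheory GRing.Theory Num.Theory.
Local Open Scope ring_scope.
Local Open Scope complex_scope.

Section LiftedMatrix.
Variable R : realType.

Definition hform (n : nat) (A : 'M[R[i]]_n) (v : 'cV[R[i]]_n) : R[i] :=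
  \sum_(p < n) \sum_(q < n) (v p 0)^* * A p q * v q 0.

Lemma Pmat_hermitian a b c a' b' c' d e f g (p q : 'I_6) :
  Pmat a b c a' b' c' d e f g q p = (Pmat a b c a' b' c' d e f g p q : R[i])^*.
Proof.
case: p q => [[|[|[|[|[|[|p]]]]]] ?] [[|[|[|[|[|[|q]]]]]] ?] //; rewrite !mxE /=.
all: apply/eqP; rewrite eq_complex /=; apply/andP; split; apply/eqP; ring.
Qed.

Definition Pmat_lift (a b c a' b' c' : R) : 'M[R[i]]_6 :=
  Pmat a b c a' b' c' (a * a' + b * b' + c * c')
    (c * b' - b * c') (a * c' - c * a') (b * a' - a * b').

Lemma hform_Pmat_lift a b c a' b' c' (x0 y0 x1 y1 x2 y2 x3 y3 x4 y4 x5 y5 : R) :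
  let v : 'cV[R[i]]_6 := \col_(k < 6) nth 0
    [:: x0 +i* y0; x1 +i* y1; x2 +i* y2; x3 +i* y3; x4 +i* y4; x5 +i* y5] k in
  let P := Pmat_lift a b c a' b' c' in
  let r0 := \sum_(q < 6) P 0 q * v q 0 in
  let r1 := \sum_(q < 6) P 1 q * v q 0 in
  complex.Im (hform P v) = 0 /\
  complex.Re (hform P v) =
      complex.Re r0 ^+ 2 + complex.Im r0 ^+ 2
    + complex.Re r1 ^+ 2 + complex.Im r1 ^+ 2
    + (1 - (a ^+ 2 + b ^+ 2 + c ^+ 2)) * (x2 ^+ 2 + y2 ^+ 2 + x3 ^+ 2 + y3 ^+ 2)
    + (1 - (a' ^+ 2 + b' ^+ 2 + c' ^+ 2)) * (x4 ^+ 2 + y4 ^+ 2 + x5 ^+ 2 + y5 ^+ 2).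
Proof.
move=> v P r0 r1; rewrite /hform /r0 /r1 /P /v /Pmat_lift.
rewrite !big_ord_recr !big_ord0 /= !mxE /=.
split; ring.
Qed.

Lemma col6E (v : 'cV[R[i]]_6) :
  v = \col_(k < 6) nth 0 [:: v 0 0; v 1 0; v 2 0; v 3 0; v 4 0; v 5 0] k.
Proof.
apply/matrixP => k j; rewrite !mxE ord1.
by case: k => [[|[|[|[|[|[|k]]]]]] ?] //=; congr (v _ _); apply/val_inj.
Qed.

Lemma Pmat_lift_hpsd (a b c a' b' c' : R) :
  a ^+ 2 + b ^+ 2 + c ^+ 2 = 1 -> a' ^+ 2 + b' ^+ 2 + c' ^+ 2 = 1 ->
  hpsd (Pmat_lift a b c a' b' c').
Proof.
move=> unit_u unit_u'; split=> [p q|v]; first exact: Pmat_hermitian.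
rewrite -[\sum_(p < 6) _]/(hform _ v) [v]col6E lecE.
case: (v 0 0) => x0 y0; case: (v 1 0) => x1 y1; case: (v 2 0) => x2 y2.
case: (v 3 0) => x3 y3; case: (v 4 0) => x4 y4; case: (v 5 0) => x5 y5.
have [-> ->] := hform_Pmat_lift a b c a' b' c' x0 y0 x1 y1 x2 y2 x3 y3 x4 y4 x5 y5.
rewrite /= eqxx unit_u unit_u' subrr !mul0r !addr0.
by rewrite !addr_ge0 ?sqr_ge0.
Qed.

End LiftedMatrix.

Lemma dot3E (R : realType) (u v : 'rV[R]_3) :
  dot3 u v = u 0 0 * v 0 0 + u 0 1 * v 0 1 + u 0 2 * v 0 2.
Proof.
rewrite /dot3 !big_ord_recr big_ord0 /= add0r.
by congr (_ + _ + _); congr (u _ _ * v _ _); exact/val_inj.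
Qed.

Lemma onSphereE (R : realType) (u : 'rV[R]_3) :
  onSphere u <-> u 0 0 ^+ 2 + u 0 1 ^+ 2 + u 0 2 ^+ 2 = 1.
Proof. by rewrite /onSphere dot3E !expr2. Qed.

Section Relaxation.
Variables (R : realType) (V : finType) (E : {set V * V}).
Variables (w : V -> R) (y : V -> 'rV[R]_3) (lam : V -> V -> R).

Definition lift_d (x : V -> 'rV[R]_3) (n n' : V) : R := dot3 (x n) (x n').
Definition lift_e (x : V -> 'rV[R]_3) (n n' : V) : R :=
  x n 0 2 * x n' 0 1 - x n 0 1 * x n' 0 2.
Definition lift_f (x : V -> 'rV[R]_3) (n n' : V) : R :=
  x n 0 0 * x n' 0 2 - x n 0 2 * x n' 0 0.
Definition lift_g (x : V -> 'rV[R]_3) (n n' : V) : R :=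
  x n 0 1 * x n' 0 0 - x n 0 0 * x n' 0 1.

Lemma feasR_lift (x : V -> 'rV[R]_3) :
  (forall n, onSphere (x n)) ->
  feasR E x (lift_d x) (lift_e x) (lift_f x) (lift_g x).
Proof.
move=> x_sphere p _; rewrite /Pedge /lift_d dot3E.
by apply: Pmat_lift_hpsd; apply/onSphereE.
Qed.

Lemma Psi_conv_tight (x : V -> 'rV[R]_3) (d : V -> V -> R) :
  (forall n n', (n, n') \in E -> d n n' = dot3 (x n) (x n')) ->
  Psi_conv E w y lam x d = Psi_orig E w y lam x.
Proof.
move=> d_dot; congr (_ + _).
by apply: eq_bigr => -[n n'] /d_dot /= ->.
Qed.

Lemma Psi_conv_lift (x : V -> 'rV[R]_3) :
  Psi_conv E w y lam x (lift_d x) = Psi_orig E w y lam x.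
Proof. exact: Psi_conv_tight. Qed.

Lemma minR_tight_minP xs ds es fs gs :
  minR E w y lam xs ds es fs gs ->
  (forall n, onSphere (xs n)) ->
  (forall n n', (n, n') \in E -> ds n n' = dot3 (xs n) (xs n')) ->
  minP E w y lam xs.
Proof.
move=> [_ xs_min] xs_sphere ds_dot; split=> // x x_sphere.
rewrite -(Psi_conv_tight ds_dot) -Psi_conv_lift.
exact/xs_min/feasR_lift.
Qed.

End Relaxation.

Theorem mainTheorem4 (R : realType) (V : finType) (E : {set V * V})
  (HEirr : forall n n' : V, (n, n') \in E -> n != n')
  (HEor : forall n n' : V, (n, n') \in E -> (n', n) \notin E)
  (y : V -> 'rV[R]_3) (Hy : forall n, onSphere (y n))
  (w : V -> R) (Hw : forall n, 0 <= w n)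
  (lam : V -> V -> R) (Hlam : forall n n', (n, n') \in E -> 0 <= lam n n') :
  (forall x : V -> 'rV[R]_3, (forall n, onSphere (x n)) ->
     exists d e f g : V -> V -> R,
       feasR E x d e f g /\ Psi_conv E w y lam x d = Psi_orig E w y lam x)
  /\
  (forall (xs : V -> 'rV[R]_3) (ds es fs gs : V -> V -> R),
     minR E w y lam xs ds es fs gs ->
     (forall n, onSphere (xs n)) ->
     (forall n n', (n, n') \in E -> ds n n' = dot3 (xs n) (xs n')) ->
     minP E w y lam xs).
Proof.
split; last exact: minR_tight_minP.
move=> x x_sphere.
exists (lift_d x), (lift_e x), (lift_f x), (lift_g x).
by split; [exact: feasR_lift | exact: Psi_conv_lift].
Qed.
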